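(* Let $\mathcal T$ be a theory of $\mathsf{LGIM}$ consisting of generalised graded implications and let $\zeta_1,\dots,\zeta_n\Rightarrow_e\eta$ be a generalised graded implication. If $\mathcal T\models\zeta_1,\dots,\zeta_n\Rightarrow_e\eta$, then $\mathcal T\vdash_{\mathsf{LGIM}}\zeta_1,\dots,\zeta_n\Rightarrow_t\eta$ for every $t\in[0,1]$ with $t<e$.
   Context: Fix a continuous t-norm $\odot$ on $[0,1]$ and let $c\oplus d = 1-((1-c)\odot(1-d))$. Write $c\odot_{\L} d=\max(c+d-1,0)$, $c\oplus_{\L} d=\min(c+d,1)$, and $\mathrm{avg}(r_1,\dots,r_n)=(r_1+\dots+r_n)/n$. Basic expressions: built from countably many variables $\phi_0,\phi_1,\dots$ and constants $\bot,\top$ by binary $\land,\lor,\odot$ and unary $\sim$. A generalised graded implication is written $\alpha_1,\dots,\alpha_n\Rightarrow_c\beta$ where $n\ge1$, $\alpha_1,\dots,\alpha_n$ is a multiset of basic expressions, $\beta$ a basic expression, $c\in[0,1]$; for $n=1$ it is a graded implication $\alpha\Rightarrow_c\beta$. Formulas of $\mathsf{LGIM}$ are built from generalised graded implications by classical $\land,\lor,\lnot$; $\Phi\to\Psi$ abbreviates $\lnot\Phi\lor\Psi$. A theory is a set of formulas. Semantics: an evaluation is a map $v$ from basic expressions to $[0,1]$ with $v(\bot)=0$, $v(\top)=1$, interpreting $\land$ by min, $\lor$ by max, $\odot$ by the t-norm, $\sim$ by $x\mapsto1-x$. $v$ satisfies $\alpha_1,\dots,\alpha_n\Rightarrow_c\beta$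 iff $\mathrm{avg}(v(\alpha_1),\dots,v(\alpha_n))\le v(\beta)+1-c$; satisfaction extends classically; $\mathcal T\models\Phi$ means every evaluation satisfying all of $\mathcal T$ satisfies $\Phi$. Calculus $\mathsf{LGIM}$: axioms are (i) all substitution instances (by generalised graded implications) of classical propositional tautologies; (ii) for all basic expressions $\alpha,\beta,\gamma$ and $c,d\in[0,1]$: ($\land_1$) $(\alpha\Rightarrow_d\beta)\land(\alpha\Rightarrow_d\gamma)\to(\alpha\Rightarrow_d\beta\land\gamma)$; ($\land_2$) $\alpha\land\beta\Rightarrow_1\alpha$; ($\land_3$) $\alpha\land\beta\Rightarrow_1\beta$; ($\lor_1$) $(\alpha\Rightarrow_d\gamma)\land(\beta\Rightarrow_d\gamma)\to(\alpha\lor\beta\Rightarrow_d\gamma)$; ($\lor_2$) $\alpha\Rightarrow_1\alpha\lor\beta$; ($\lor_3$) $\beta\Rightarrow_1\alpha\lor\beta$; ($\odot_1$) $(\top\Rightarrow_c\alpha)\land(\top\Rightarrow_d\beta)\to(\top\Rightarrow_{c\odot d}\alpha\odot\beta)$; ($\odot_2$) $(\alpha\Rightarrow_c\bot)\land(\beta\Rightarrow_d\bot)\to(\alpha\odot\beta\Rightarrow_{c\oplus d}\bot)$; ($\odot_3$) $\top\Rightarrow_1\top\odot\top$; ($\sim_1$) $(\alpha\Rightarrow_d\beta)\to(\sim\beta\Rightarrow_d\sim\alpha)$; ($\sim_2$) $\sim\sim\alpha\Rightarrow_1\alpha$; ($\sim_3$) $\alpha\Rightarrow_1\sim\sim\alpha$;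 ($\top$) $\alpha\Rightarrow_1\top$; ($\bot$) $\bot\Rightarrow_1\alpha$; (0) $\alpha\Rightarrow_0\beta$; ($c$) $\alpha\Rightarrow_c\alpha$; (inkons) $\lnot(\top\Rightarrow_c\bot)$ for $c>0$; (trans$_1$) $(\alpha\Rightarrow_c\beta)\land(\beta\Rightarrow_d\gamma)\to(\alpha\Rightarrow_{c\odot_{\L}d}\gamma)$; (trans$_2$) $(\alpha\Rightarrow_c\bot)\land(\top\Rightarrow_d\beta)\to(\alpha\Rightarrow_{c\oplus_{\L}d}\beta)$; (lin$_1$) $(\alpha\Rightarrow_1\beta)\lor(\beta\Rightarrow_1\alpha)$; (lin$_2$) $(\top\Rightarrow_d\alpha)\lor(\alpha\Rightarrow_{1-d}\bot)$; (iii) for all basic expressions $\alpha,\alpha_i,\beta_i,\beta,\gamma$ and $c,c_i,d\in[0,1]$: (trans$\varnothing_1$) $(\alpha_1\Rightarrow_{c_1}\beta_1)\land\dots\land(\alpha_n\Rightarrow_{c_n}\beta_n)\land(\beta_1,\dots,\beta_n\Rightarrow_d\gamma)\to(\alpha_1,\dots,\alpha_n\Rightarrow_{\mathrm{avg}(c_1,\dots,c_n)\odot_{\L}d}\gamma)$; (trans$\varnothing_2$) $(\alpha_1,\dots,\alpha_n\Rightarrow_c\beta)\land(\beta\Rightarrow_d\gamma)\to(\alpha_1,\dots,\alpha_n\Rightarrow_{c\odot_{\L}d}\gamma)$; (trans$\varnothing_3$) $(\alpha_1\Rightarrow_{c_1}\bot)\land\dots\land(\alpha_n\Rightarrow_{c_n}\bot)\land(\top\Rightarrow_d\beta)\to(\alpha_1,\dots,\alpha_n\Rightarrow_{\mathrm{avg}(c_1,\dots,c_n)\oplus_{\L}d}\beta)$;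 ($\top\varnothing$) $(\top,\dots,\top\Rightarrow_c\alpha)\to(\top\Rightarrow_c\alpha)$. The only rule is modus ponens. $\mathcal T\vdash_{\mathsf{LGIM}}\Phi$ means $\Phi$ has a finite derivation from axioms and elements of $\mathcal T$ by modus ponens. *)

From Stdlib Require Import Reals List Permutation.
Import ListNotations.
Open Scope R_scope.

Definition in01 (x : R) : Prop := 0 <= x <= 1.

Definition is_tnorm (tn : R -> R -> R) : Prop :=
  (forall x y, in01 x -> in01 y -> in01 (tn x y)) /\
  (forall x y, in01 x -> in01 y -> tn x y = tn y x) /\
  (forall x y z, in01 x -> in01 y -> in01 z -> tn x (tn y z) = tn (tn x y) z) /\
  (forall x x' y, in01 x -> in01 x' -> in01 y -> x <= x' -> tn x y <= tn x' y) /\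
  (forall x, in01 x -> tn x 1 = x).

Definition continuous01 (tn : R -> R -> R) : Prop :=
  forall x y, in01 x -> in01 y -> forall eps, 0 < eps ->
    exists delta, 0 < delta /\
      forall x' y', in01 x' -> in01 y' -> Rabs (x - x') < delta -> Rabs (y - y') < delta ->
        Rabs (tn x y - tn x' y') < eps.

Definition is_cont_tnorm (tn : R -> R -> R) : Prop := is_tnorm tn /\ continuous01 tn.

Definition tconorm (tn : R -> R -> R) (c d : R) : R := 1 - tn (1 - c) (1 - d).

Definition luk_and (c d : R) : R := Rmax (c + d - 1) 0.
Definition luk_or (c d : R) : R := Rmin (c + d) 1.

Definition avg (l : list R) : R := fold_right Rplus 0 l / INR (length l).

Inductive bexpr : Type :=
| BVar : nat -> bexpr
| BBot : bexpr
| BTop : bexpr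
| BAnd : bexpr -> bexpr -> bexpr
| BOr : bexpr -> bexpr -> bexpr
| BOdot : bexpr -> bexpr -> bexpr
| BNeg : bexpr -> bexpr.

(* ---------- formulas of LGIM ----------
   GI a l b c  represents the generalised graded implication
   a, l_1, ..., l_k  =>_c  b   (antecedent multiset a :: l, non-empty). *)
Inductive form : Type :=
| GI : bexpr -> list bexpr -> bexpr -> R -> form
| FAnd : form -> form -> form
| FOr : form -> form -> form
| FNot : form -> form.

Definition FImp (p q : form) : form := FOr (FNot p) q.

Definition GI1 (a b : bexpr) (c : R) : form := GI a [] b c.

Fixpoint wf_form (p : form) : Prop :=
  match p with
  | GI _ _ _ c => in01 c
  | FAnd p q | FOr p q => wf_form p /\ wf_form q
  | FNot p => wf_form p
  end.

Definition is_gi (p : form) : Prop := exists a l b c, p = GI a l b c.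

Definition is_eval (tn : R -> R -> R) (v : bexpr -> R) : Prop :=
  (forall e, in01 (v e)) /\ v BBot = 0 /\ v BTop = 1 /\
  (forall a b, v (BAnd a b) = Rmin (v a) (v b)) /\
  (forall a b, v (BOr a b) = Rmax (v a) (v b)) /\
  (forall a b, v (BOdot a b) = tn (v a) (v b)) /\
  (forall a, v (BNeg a) = 1 - v a).

Fixpoint sat (v : bexpr -> R) (p : form) : Prop :=
  match p with
  | GI a l b c => avg (map v (a :: l)) <= v b + 1 - c
  | FAnd p q => sat v p /\ sat v q
  | FOr p q => sat v p \/ sat v q
  | FNot p => ~ sat v p
  end.

Definition models (tn : R -> R -> R) (T : form -> Prop) (p : form) : Prop :=
  forall v, is_eval tn v -> (forall q, T q -> sat v q) -> sat v p.

(* ---------- classical tautologies ----------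
   A formula is a substitution instance of a classical tautology iff it is true
   under every boolean valuation of its atoms; atoms are generalised graded
   implications whose antecedent is a multiset, so valuations must not
   distinguish atoms whose antecedents are permutations of each other. *)
Definition atom_val := bexpr -> list bexpr -> bexpr -> R -> bool.

Definition perm_invariant (V : atom_val) : Prop :=
  forall a l a' l' b c, Permutation (a :: l) (a' :: l') -> V a l b c = V a' l' b c.

Fixpoint peval (V : atom_val) (p : form) : bool :=
  match p with
  | GI a l b c => V a l b c
  | FAnd p q => andb (peval V p) (peval V q)
  | FOr p q => orb (peval V p) (peval V q)
  | FNot p => negb (peval V p)
  end.

Definition tautology_instance (p : form) : Prop :=
  wf_form p /\ forall V, perm_invariant V -> peval V p = true.

Fixpoint conjs (p : form) (l : list form) : form :=
  match l with
  | [] => p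
  | q :: l' => FAnd p (conjs q l')
  end.

(* triples (alpha_i, beta_i, c_i) *)
Definition t1 (x : bexpr * bexpr * R) : bexpr := fst (fst x).
Definition t2 (x : bexpr * bexpr * R) : bexpr := snd (fst x).
Definition t3 (x : bexpr * bexpr * R) : R := snd x.

Inductive axiom (tn : R -> R -> R) : form -> Prop :=
| ax_taut : forall p, tautology_instance p -> axiom tn p
| ax_and1 : forall a b g d, in01 d ->
    axiom tn (FImp (FAnd (GI1 a b d) (GI1 a g d)) (GI1 a (BAnd b g) d))
| ax_and2 : forall a b, axiom tn (GI1 (BAnd a b) a 1)
| ax_and3 : forall a b, axiom tn (GI1 (BAnd a b) b 1)
| ax_or1 : forall a b g d, in01 d ->
    axiom tn (FImp (FAnd (GI1 a g d) (GI1 b g d)) (GI1 (BOr a b) g d))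
| ax_or2 : forall a b, axiom tn (GI1 a (BOr a b) 1)
| ax_or3 : forall a b, axiom tn (GI1 b (BOr a b) 1)
| ax_odot1 : forall a b c d, in01 c -> in01 d ->
    axiom tn (FImp (FAnd (GI1 BTop a c) (GI1 BTop b d)) (GI1 BTop (BOdot a b) (tn c d)))
| ax_odot2 : forall a b c d, in01 c -> in01 d ->
    axiom tn (FImp (FAnd (GI1 a BBot c) (GI1 b BBot d)) (GI1 (BOdot a b) BBot (tconorm tn c d)))
| ax_odot3 : axiom tn (GI1 BTop (BOdot BTop BTop) 1)
| ax_neg1 : forall a b d, in01 d ->
    axiom tn (FImp (GI1 a b d) (GI1 (BNeg b) (BNeg a) d))
| ax_neg2 : forall a, axiom tn (GI1 (BNeg (BNeg a)) a 1)
| ax_neg3 : forall a, axiom tn (GI1 a (BNeg (BNeg a)) 1)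
| ax_top : forall a, axiom tn (GI1 a BTop 1)
| ax_bot : forall a, axiom tn (GI1 BBot a 1)
| ax_zero : forall a b, axiom tn (GI1 a b 0)
| ax_refl : forall a c, in01 c -> axiom tn (GI1 a a c)
| ax_inkons : forall c, in01 c -> 0 < c -> axiom tn (FNot (GI1 BTop BBot c))
| ax_trans1 : forall a b g c d, in01 c -> in01 d ->
    axiom tn (FImp (FAnd (GI1 a b c) (GI1 b g d)) (GI1 a g (luk_and c d)))
| ax_trans2 : forall a b c d, in01 c -> in01 d ->
    axiom tn (FImp (FAnd (GI1 a BBot c) (GI1 BTop b d)) (GI1 a b (luk_or c d)))
| ax_lin1 : forall a b, axiom tn (FOr (GI1 a b 1) (GI1 b a 1))
| ax_lin2 : forall a d, in01 d -> axiom tn (FOr (GI1 BTop a d) (GI1 a BBot (1 - d)))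
(* (trans0_1): triples (alpha_i, beta_i, c_i), i = 1..n, given as x :: xs *)
| ax_gtrans1 : forall (x : bexpr * bexpr * R) xs g d,
    Forall (fun y => in01 (t3 y)) (x :: xs) -> in01 d ->
    axiom tn (FImp
      (conjs (GI1 (t1 x) (t2 x) (t3 x))
             (map (fun y => GI1 (t1 y) (t2 y) (t3 y)) xs ++ [GI (t2 x) (map t2 xs) g d]))
      (GI (t1 x) (map t1 xs) g (luk_and (avg (map t3 (x :: xs))) d)))
| ax_gtrans2 : forall a l b g c d, in01 c -> in01 d ->
    axiom tn (FImp (FAnd (GI a l b c) (GI1 b g d)) (GI a l g (luk_and c d)))
(* (trans0_3): pairs (alpha_i, c_i) given as x :: xs *)
| ax_gtrans3 : forall (x : bexpr * R) xs b d,
    Forall (fun y => in01 (snd y)) (x :: xs) -> in01 d ->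
    axiom tn (FImp
      (conjs (GI1 (fst x) BBot (snd x))
             (map (fun y => GI1 (fst y) BBot (snd y)) xs ++ [GI1 BTop b d]))
      (GI (fst x) (map fst xs) b (luk_or (avg (map snd (x :: xs))) d)))
| ax_gtop : forall k a c, in01 c ->
    axiom tn (FImp (GI BTop (repeat BTop k) a c) (GI1 BTop a c)).

Inductive lgim_derivable (tn : R -> R -> R) (T : form -> Prop) : form -> Prop :=
| d_ax : forall p, axiom tn p -> lgim_derivable tn T p
| d_hyp : forall p, T p -> lgim_derivable tn T p
| d_mp : forall p q, lgim_derivable tn T p -> lgim_derivable tn T (FImp p q) -> lgim_derivable tn T q.

(* Completeness via a canonical evaluation.  If  zs =>_t eta  is not derivable
   from T, Zorn's lemma extends T to a theory Gam maximal among those not deriving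
   it, and such a Gam decides every formula.  Put  v(a) = sup { c | Gam |- top =>_c a }.
   For any theory, every graded implication derivable from it holds under v; for
   the maximal Gam the axioms moreover force v to be an evaluation (continuity of
   the t-norm handles the strong conjunction).  Hence v satisfies T and therefore
   zs =>_e eta.  But then (trans0_3) derives  zs =>_t eta  from Gam, out of
   approximations  top =>_c eta  and  a_i =>_d bot  of the values of v: the gap
   e - t absorbs the approximation error. *)

From Stdlib Require Import Reals List Lra Classical.
From mathcomp Require classical_sets.
Set Bullet Behavior "Strict Subproofs".
Import ListNotations.
Open Scope R_scope.

Ltac taut_tac := split; [simpl; tauto | intros V _; simpl;
  repeat match goal with |- context [peval V ?x] => destruct (peval V x) end; reflexivity].

Section Tautologies.
Variables p q r : form.
Hypotheses (wp : wf_form p) (wq : wf_form q) (wr : wf_form r).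

Lemma taut_K : tautology_instance (FImp p (FImp q p)). Proof. taut_tac. Qed.
Lemma taut_I : tautology_instance (FImp p p). Proof. taut_tac. Qed.
Lemma taut_S : tautology_instance (FImp (FImp p (FImp q r)) (FImp (FImp p q) (FImp p r))).
Proof. taut_tac. Qed.
Lemma taut_and_intro : tautology_instance (FImp p (FImp q (FAnd p q))). Proof. taut_tac. Qed.
Lemma taut_cases : tautology_instance (FImp (FImp p r) (FImp (FImp (FNot p) r) r)).
Proof. taut_tac. Qed.
Lemma taut_explosion : tautology_instance (FImp p (FImp (FNot p) r)). Proof. taut_tac. Qed.
Lemma taut_or_elim : tautology_instance (FImp (FOr p q) (FImp (FNot p) (FImp (FNot q) r))).
Proof. taut_tac. Qed.
End Tautologies.

Lemma in01_0 : in01 0. Proof. unfold in01; lra. Qed.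
Lemma in01_1 : in01 1. Proof. unfold in01; lra. Qed.
Lemma in01_1m c : in01 c -> in01 (1 - c). Proof. unfold in01; lra. Qed.

Lemma luk_and_in01 c d : in01 c -> in01 d -> in01 (luk_and c d).
Proof. unfold in01, luk_and, Rmax; intros; destruct (Rle_dec _ _); lra. Qed.

Lemma luk_or_in01 c d : in01 c -> in01 d -> in01 (luk_or c d).
Proof. unfold in01, luk_or, Rmin; intros; destruct (Rle_dec _ _); lra. Qed.

Lemma tn_in01 tn c d : is_tnorm tn -> in01 c -> in01 d -> in01 (tn c d).
Proof. intros [H _]; apply H. Qed.

Lemma tconorm_in01 tn c d : is_tnorm tn -> in01 c -> in01 d -> in01 (tconorm tn c d).
Proof. intros; apply in01_1m, tn_in01, in01_1m; auto; apply in01_1m; auto. Qed.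

Lemma Rmax0_sub_in01 x r : 0 <= r -> x <= 1 -> in01 (Rmax 0 (x - r)).
Proof. unfold in01, Rmax; intros; destruct (Rle_dec _ _); lra. Qed.

Lemma Rmax0_sub_lt x r : 0 < r -> Rmax 0 (x - r) = 0 \/ Rmax 0 (x - r) < x.
Proof. unfold Rmax; intros; destruct (Rle_dec _ _); [right|left]; lra. Qed.

Lemma Rmax0_sub_dist x r : 0 <= x -> 0 <= r -> Rabs (x - Rmax 0 (x - r)) <= r.
Proof.
  unfold Rmax, Rabs; intros; destruct (Rle_dec _ _) as [|Hn]; [|apply Rnot_le_lt in Hn];
    destruct (Rcase_abs _); lra.
Qed.

Lemma length_cons_pos (A : Type) (a : A) l : 0 < INR (length (a :: l)).
Proof. cbn [length]; rewrite S_INR; pose proof (pos_INR (length l)); lra. Qed.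

Lemma sum_in01 l : Forall in01 l -> 0 <= fold_right Rplus 0 l <= INR (length l).
Proof.
  induction 1; cbn [fold_right length]; [simpl; lra|rewrite S_INR; unfold in01 in *; lra].
Qed.

Lemma avg_in01 a l : Forall in01 (a :: l) -> in01 (avg (a :: l)).
Proof.
  intros Hl; apply sum_in01 in Hl; pose proof (length_cons_pos R a l) as Hn.
  unfold avg, in01; set (s := fold_right Rplus 0 _) in *; set (n := INR _) in *.
  split; apply (Rmult_le_reg_r n); try lra; unfold Rdiv; rewrite Rmult_assoc, Rinv_l; lra.
Qed.

Lemma avg_map_in01 (A : Type) (f : A -> R) a l :
  (forall y, In y (a :: l) -> in01 (f y)) -> in01 (avg (map f (a :: l))).
Proof.
  intros Hf; apply avg_in01, Forall_forall; intros x Hx.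
  change (In x (map f (a :: l))) in Hx; apply in_map_iff in Hx as [y [<- Hy]]; auto.
Qed.

Lemma avg_single x : avg [x] = x.
Proof. unfold avg; simpl; field. Qed.

Lemma avg_shift (A : Type) (f g : A -> R) eps a l :
  (forall y, In y (a :: l) -> g y - eps <= f y) ->
  avg (map g (a :: l)) - eps <= avg (map f (a :: l)).
Proof.
  intros H.
  assert (Hsum : forall k, (forall y, In y k -> g y - eps <= f y) ->
            fold_right Rplus 0 (map g k) - INR (length k) * eps <= fold_right Rplus 0 (map f k)).
  { induction k as [|b k IH]; intros Hk; cbn [map fold_right length]; [simpl; lra|].
    rewrite S_INR; pose proof (Hk b (or_introl eq_refl)).
    pose proof (IH (fun y Hy => Hk y (or_intror Hy))); lra. }
  specialize (Hsum _ H); pose proof (length_cons_pos A a l) as Hn.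
  unfold avg; rewrite !length_map.
  set (n := INR (length (a :: l))) in *; set (Sg := fold_right Rplus 0 (map g _)) in *;
    set (Sf := fold_right Rplus 0 (map f _)) in *.
  apply (Rmult_le_reg_r n); [lra|].
  replace ((Sg / n - eps) * n) with (Sg - n * eps) by (field; lra).
  replace (Sf / n * n) with Sf by (field; lra); lra.
Qed.

Lemma avg_one_minus (A : Type) (h : A -> R) a l :
  avg (map (fun y => 1 - h y) (a :: l)) = 1 - avg (map h (a :: l)).
Proof.
  assert (Hsum : forall k, fold_right Rplus 0 (map (fun y => 1 - h y) k)
                         = INR (length k) - fold_right Rplus 0 (map h k)).
  { induction k; cbn [map fold_right length]; [simpl; ring | rewrite S_INR, IHk; ring]. }
  unfold avg; rewrite !length_map, Hsum; pose proof (length_cons_pos A a l); field; lra.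
Qed.

Section Derivability.
Variable tn : R -> R -> R.

Lemma derivable_mono (S S' : form -> Prop) p :
  lgim_derivable tn S p -> (forall q, S q -> S' q) -> lgim_derivable tn S' p.
Proof.
  intros H HS; induction H as [p Hp|p Hp|p q _ IHp _ IHpq].
  - apply d_ax, Hp.
  - apply d_hyp, HS, Hp.
  - exact (d_mp _ _ _ _ IHp IHpq).
Qed.

Lemma derivable_finite S p : lgim_derivable tn S p ->
  exists L, (forall q, In q L -> S q) /\ lgim_derivable tn (fun q => In q L) p.
Proof.
  induction 1 as [p Hp|p Hp|p q _ [L1 [H1 D1]] _ [L2 [H2 D2]]].
  - exists []; split; [intros q []|apply d_ax; exact Hp].
  - exists [p]; split; [intros q [<-|[]]; exact Hp|apply d_hyp; left; reflexivity].
  - exists (L1 ++ L2); split.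
    + intros r Hr; apply in_app_or in Hr as [Hr|Hr]; auto.
    + eapply d_mp; [eapply derivable_mono; [exact D1|]|eapply derivable_mono; [exact D2|]];
        intros r Hr; apply in_or_app; auto.
Qed.

Lemma derivable_taut S a b :
  lgim_derivable tn S a -> tautology_instance (FImp a b) -> lgim_derivable tn S b.
Proof. intros Ha Ht; eapply d_mp; [exact Ha|apply d_ax, ax_taut, Ht]. Qed.

Lemma derivable_taut2 S a b c : lgim_derivable tn S a -> lgim_derivable tn S b ->
  tautology_instance (FImp a (FImp b c)) -> lgim_derivable tn S c.
Proof. intros Ha Hb Ht; eapply d_mp; [exact Hb|]; eapply derivable_taut; [exact Ha|exact Ht]. Qed.

Lemma conjs_wf p l : wf_form p -> Forall wf_form l -> wf_form (conjs p l).
Proof. revert p; induction l; intros p Hp Hl; simpl; auto; inversion Hl; split; auto. Qed.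

Hypothesis Htn : is_tnorm tn.

Lemma axiom_wf p : axiom tn p -> wf_form p.
Proof.
  Local Hint Resolve luk_and_in01 luk_or_in01 in01_1m in01_0 in01_1 tn_in01 tconorm_in01 : wfdb.
  destruct 1 as [p [Hp _]| | | | | | | | | | | | | | | | | | | | | |
                 x xs g d Hx Hd| | x xs b d Hx Hd|];
    unfold FImp, GI1; simpl; repeat match goal with |- _ /\ _ => split end; eauto with wfdb.
  - apply conjs_wf; [exact (Forall_inv Hx)|apply Forall_app; split].
    + apply Forall_map, (Forall_inv_tail Hx).
    + constructor; [exact Hd|constructor].
  - apply luk_and_in01; [|exact Hd].
    apply avg_in01; change (t3 x :: map t3 xs) with (map t3 (x :: xs)); apply Forall_map, Hx.
  - apply conjs_wf; [exact (Forall_inv Hx)|apply Forall_app; split].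
    + apply Forall_map, (Forall_inv_tail Hx).
    + constructor; [exact Hd|constructor].
  - apply luk_or_in01; [|exact Hd].
    apply avg_in01; change (snd x :: map snd xs) with (map snd (x :: xs)); apply Forall_map, Hx.
Qed.

Lemma derivable_wf S p :
  (forall q, S q -> wf_form q) -> lgim_derivable tn S p -> wf_form p.
Proof. intros HS H; induction H; [apply axiom_wf|auto|simpl in *; tauto]; auto. Qed.

Lemma deduction S p q : (forall r, S r -> wf_form r) -> wf_form p ->
  lgim_derivable tn (fun r => S r \/ r = p) q -> lgim_derivable tn S (FImp p q).
Proof.
  intros HS Hp H.
  assert (HS' : forall r, S r \/ r = p -> wf_form r) by (intros r [Hr| ->]; auto).
  induction H as [q Hq|q [Hq| ->]|q r Hq IHq Hqr IHqr].
  - eapply derivable_taut; [apply d_ax, Hq|apply taut_K; auto; apply axiom_wf, Hq].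
  - eapply derivable_taut; [apply d_hyp, Hq|apply taut_K; auto].
  - apply d_ax, ax_taut, taut_I, Hp.
  - assert (Hw : wf_form (FImp q r)) by exact (derivable_wf _ _ HS' Hqr).
    eapply derivable_taut2; [exact IHqr|exact IHq|apply taut_S; simpl in Hw; tauto].
Qed.

End Derivability.

Lemma chain_covers_finite (T : form -> Prop) (F : (form -> Prop) -> Prop) L :
  (forall X Y, F X -> F Y -> (forall x, X x -> Y x) \/ (forall x, Y x -> X x)) ->
  (forall q, In q L -> T q \/ exists X, F X /\ X q) ->
  (forall q, In q L -> T q) \/ exists Y, F Y /\ forall q, In q L -> T q \/ Y q.
Proof.
  intros Ftot; induction L as [|a L IH]; intros H; [left; intros q []|].
  destruct (H a (or_introl eq_refl)) as [Ta|[X [FX Xa]]];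
    destruct IH as [IH|[Y [FY HY]]]; try (intros; apply H; right; assumption).
  - left; intros q [<-|Hq]; auto.
  - right; exists Y; split; [exact FY|]; intros q [<-|Hq]; auto.
  - right; exists X; split; [exact FX|]; intros q [<-|Hq]; auto.
  - destruct (Ftot X Y FX FY) as [XY|YX].
    + right; exists Y; split; [exact FY|]; intros q [<-|Hq]; auto.
    + right; exists X; split; [exact FX|]; intros q [<-|Hq]; auto.
      destruct (HY q Hq); auto.
Qed.

Lemma lindenbaum tn (T : form -> Prop) G :
  (forall q, T q -> wf_form q) -> ~ lgim_derivable tn T G ->
  exists Gam : form -> Prop,
    (forall q, T q -> Gam q) /\ (forall q, Gam q -> wf_form q) /\
    ~ lgim_derivable tn Gam G /\
    (forall p, wf_form p -> ~ Gam p -> lgim_derivable tn (fun q => Gam q \/ q = p) G).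
Proof.
  intros HTw HnG.
  set (P := fun X : form -> Prop =>
              (forall q, X q -> wf_form q) /\ ~ lgim_derivable tn (fun q => T q \/ X q) G).
  destruct (@classical_sets.Zorn_bigcup form P) as [A [[HAw HAnG] HAmax]].
  - intros F HFP HFtot; split.
    + intros q [X FX Xq]; exact (proj1 (HFP X FX) q Xq).
    + intros Hd; apply derivable_finite in Hd as [L [HL HdL]].
      destruct (chain_covers_finite T F L HFtot) as [HLT|[Y [FY HY]]].
      * intros q Hq; destruct (HL q Hq) as [Tq|[X FX Xq]]; eauto.
      * apply HnG; eapply derivable_mono; eauto.
      * apply (proj2 (HFP Y FY)); eapply derivable_mono; eauto.
  - exists (fun q => T q \/ A q); split; [|split; [|split]].
    + intros q Tq; left; exact Tq.
    + intros q [Tq|Aq]; auto.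
    + exact HAnG.
    + intros p Hp HpA; apply NNPP; intros Hn.
      apply (HAmax (fun q => A q \/ q = p)); [unfold classical_sets.proper|split].
      * split; [intros q Aq; left; exact Aq|intros Hsub].
        apply HpA; right; exact (Hsub p (or_intror eq_refl)).
      * intros q [Aq| ->]; auto.
      * intros Hd; apply Hn; eapply derivable_mono; [exact Hd|]; intros q; tauto.
Qed.

Section DerivedRules.
Variable tn : R -> R -> R.
Variable S : form -> Prop.
Notation D p := (lgim_derivable tn S p).

Lemma der_and p q : wf_form p -> wf_form q -> D p -> D q -> D (FAnd p q).
Proof.
  intros Hp Hq Dp Dq; eapply derivable_taut2; [exact Dp|exact Dq|apply taut_and_intro; auto].
Qed.

Lemma der_conjs p l : (forall q, In q (p :: l) -> wf_form q /\ D q) -> D (conjs p l).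
Proof.
  revert p; induction l as [|q l IH]; intros p H; simpl; [apply H; left; auto|].
  destruct (H p (or_introl eq_refl)) as [Hpw Hp].
  apply der_and; auto.
  - apply conjs_wf; [apply H; right; left; auto|].
    apply Forall_forall; intros r Hr; apply H; right; right; exact Hr.
  - apply IH; intros r Hr; apply H; right; exact Hr.
Qed.

Lemma der_grade_lower a l b c d :
  in01 c -> in01 d -> d <= c -> D (GI a l b c) -> D (GI a l b d).
Proof.
  intros Hc Hd Hdc H.
  assert (Hc' : in01 (1 - (c - d))) by (unfold in01 in *; lra).
  replace d with (luk_and c (1 - (c - d)))
    by (unfold luk_and, Rmax; destruct (Rle_dec _ _); unfold in01 in *; lra).
  eapply d_mp; [|apply d_ax, (ax_gtrans2 tn a l b b c _ Hc Hc')].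
  apply der_and; simpl; auto; apply d_ax, ax_refl, Hc'.
Qed.

(* (trans0_1) with all a_i := top, followed by (top0). *)
Lemma der_top_avg (f : bexpr -> R) a l b d :
  (forall y, In y (a :: l) -> in01 (f y) /\ D (GI1 BTop y (f y))) ->
  in01 d -> D (GI a l b d) ->
  D (GI1 BTop b (luk_and (avg (map f (a :: l))) d)).
Proof.
  intros Hf Hd Hab.
  set (xs := map (fun y => (BTop, y, f y)) l).
  assert (HF : Forall (fun y => in01 (t3 y)) ((BTop, a, f a) :: xs)).
  { constructor; [apply Hf; left; auto|].
    apply Forall_map, Forall_forall; intros y Hy; apply Hf; right; exact Hy. }
  pose proof (ax_gtrans1 tn (BTop, a, f a) xs b d HF Hd) as Hax.
  unfold xs in Hax; cbn [map] in Hax; rewrite !map_map in Hax; cbn [t1 t2 t3 fst snd] in Hax.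
  rewrite map_id, map_const in Hax.
  assert (Havg : in01 (luk_and (avg (map f (a :: l))) d)).
  { apply luk_and_in01; [apply avg_map_in01; intros y Hy; apply Hf, Hy|exact Hd]. }
  eapply d_mp; [eapply d_mp; [|exact (d_ax _ _ _ Hax)]|apply d_ax, ax_gtop, Havg].
  apply der_conjs; intros q [<-|Hq]; [apply Hf; left; auto|].
  apply in_app_or in Hq as [Hq|[<-|[]]]; [|split; [exact Hd|exact Hab]].
  apply in_map_iff in Hq as [y [<- Hy]]; apply Hf; right; exact Hy.
Qed.

Lemma der_bot_avg (g : bexpr -> R) a l b d :
  (forall y, In y (a :: l) -> in01 (g y) /\ D (GI1 y BBot (g y))) ->
  in01 d -> D (GI1 BTop b d) ->
  D (GI a l b (luk_or (avg (map g (a :: l))) d)).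
Proof.
  intros Hg Hd Hb.
  set (xs := map (fun y => (y, g y)) l).
  assert (HF : Forall (fun y => in01 (snd y)) ((a, g a) :: xs)).
  { constructor; [apply Hg; left; auto|].
    apply Forall_map, Forall_forall; intros y Hy; apply Hg; right; exact Hy. }
  pose proof (ax_gtrans3 tn (a, g a) xs b d HF Hd) as Hax.
  unfold xs in Hax; cbn [map] in Hax; rewrite !map_map in Hax; cbn [fst snd] in Hax.
  rewrite map_id in Hax.
  eapply d_mp; [|exact (d_ax _ _ _ Hax)].
  apply der_conjs; intros q [<-|Hq]; [apply Hg; left; auto|].
  apply in_app_or in Hq as [Hq|[<-|[]]]; [|split; [exact Hd|exact Hb]].
  apply in_map_iff in Hq as [y [<- Hy]]; apply Hg; right; exact Hy.
Qed.

End DerivedRules.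

Section SupremumValuation.
Variables (tn : R -> R -> R) (Gam : form -> Prop).
Notation D p := (lgim_derivable tn Gam p).

Definition top_grades (a : bexpr) (c : R) : Prop := in01 c /\ D (GI1 BTop a c).

Lemma top_grades_bound a : bound (top_grades a).
Proof. exists 1; intros x [Hx _]; apply Hx. Qed.

Lemma top_grades_inhabited a : exists x, top_grades a x.
Proof. exists 0; split; [apply in01_0|apply d_ax, ax_zero]. Qed.

Definition sup_val (a : bexpr) : R :=
  proj1_sig (completeness (top_grades a) (top_grades_bound a) (top_grades_inhabited a)).

Local Notation v := sup_val.

Lemma sup_val_lub a : is_lub (top_grades a) (v a).
Proof. unfold v; destruct (completeness _ _ _); auto. Qed.

Lemma sup_val_ge a c : in01 c -> D (GI1 BTop a c) -> c <= v a.
Proof. intros; apply (proj1 (sup_val_lub a)); split; auto. Qed.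

Lemma sup_val_in01 a : in01 (v a).
Proof.
  split; [apply sup_val_ge; [apply in01_0|apply d_ax, ax_zero]|].
  apply (proj2 (sup_val_lub a)); intros x [Hx _]; apply Hx.
Qed.

Lemma der_top_of_lt a c : in01 c -> c < v a -> D (GI1 BTop a c).
Proof.
  intros Hc Hlt; apply NNPP; intros Hn.
  enough (v a <= c) by lra.
  apply (proj2 (sup_val_lub a)); intros x [Hx Dx]; apply Rnot_lt_le; intros Hcx.
  apply Hn; eapply der_grade_lower; eauto; lra.
Qed.

Lemma der_top_below a r : 0 < r -> D (GI1 BTop a (Rmax 0 (v a - r))).
Proof.
  intros Hr; destruct (Rmax0_sub_lt (v a) r Hr) as [-> | Hlt]; [apply d_ax, ax_zero|].
  apply der_top_of_lt; [apply Rmax0_sub_in01; [lra|apply sup_val_in01]|exact Hlt].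
Qed.

Lemma sup_val_sat a l b c :
  in01 c -> D (GI a l b c) -> avg (map v (a :: l)) <= v b + 1 - c.
Proof.
  intros Hc H; apply Rnot_lt_le; intros Hlt.
  set (r := (avg (map v (a :: l)) - (v b + 1 - c)) / 2).
  assert (Hr : 0 < r) by (unfold r; lra).
  set (f := fun y => Rmax 0 (v y - r)).
  assert (Hf : forall y, In y (a :: l) -> in01 (f y) /\ D (GI1 BTop y (f y))).
  { intros y _; split; [apply Rmax0_sub_in01; [lra|apply sup_val_in01]|apply der_top_below, Hr]. }
  assert (Havg : in01 (luk_and (avg (map f (a :: l))) c)).
  { apply luk_and_in01; [apply avg_map_in01; intros y Hy; apply Hf, Hy|exact Hc]. }
  pose proof (sup_val_ge _ _ Havg (der_top_avg tn Gam f a l b c Hf Hc H)) as Hb.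
  assert (Hshift : avg (map v (a :: l)) - r <= avg (map f (a :: l)))
    by (apply avg_shift; intros y _; apply Rmax_r).
  pose proof (Rmax_l (avg (map f (a :: l)) + c - 1) 0).
  unfold luk_and, r in *; lra.
Qed.

Lemma sup_val_sat1 a b c : in01 c -> D (GI1 a b c) -> v a <= v b + 1 - c.
Proof.
  intros Hc H; pose proof (sup_val_sat a [] b c Hc H) as Hsat.
  simpl map in Hsat; rewrite avg_single in Hsat; exact Hsat.
Qed.

Lemma sup_val_top : v BTop = 1.
Proof.
  pose proof (sup_val_in01 BTop).
  pose proof (sup_val_ge BTop 1 in01_1 (d_ax _ _ _ (ax_refl _ _ _ in01_1))).
  unfold in01 in *; lra.
Qed.

Section MaximalTheory.
Hypothesis Htn : is_tnorm tn.
Hypothesis Hct : continuous01 tn.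
Variable G : form.
Hypothesis HGw : wf_form G.
Hypothesis HGamw : forall q, Gam q -> wf_form q.
Hypothesis HnG : ~ D G.
Hypothesis Hmax : forall p, wf_form p -> ~ Gam p -> lgim_derivable tn (fun r => Gam r \/ r = p) G.

Lemma der_or_imp_goal p : wf_form p -> D p \/ D (FImp p G).
Proof.
  intros Hp; destruct (classic (Gam p)); [left; apply d_hyp; auto|].
  right; apply deduction; auto.
Qed.

Lemma der_decides p : wf_form p -> D p \/ D (FNot p).
Proof.
  intros Hp; destruct (der_or_imp_goal p Hp) as [|H1]; auto.
  destruct (der_or_imp_goal (FNot p) Hp) as [|H2]; auto.
  exfalso; apply HnG; eapply derivable_taut2; [exact H1|exact H2|apply taut_cases; auto].
Qed.

Lemma der_consistent p : wf_form p -> D p -> D (FNot p) -> False.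
Proof.
  intros Hp H1 H2; apply HnG; eapply derivable_taut2; [exact H1|exact H2|].
  apply taut_explosion; auto.
Qed.

Lemma der_or_elim p q : wf_form p -> wf_form q -> D (FOr p q) -> D p \/ D q.
Proof.
  intros Hp Hq H; destruct (der_decides p Hp) as [|H1]; auto.
  destruct (der_decides q Hq) as [|H2]; auto.
  exfalso; apply HnG; eapply d_mp; [exact H2|].
  eapply derivable_taut2; [exact H|exact H1|apply taut_or_elim; auto].
Qed.

Lemma der_bot_of_lt a d : in01 d -> d < 1 - v a -> D (GI1 a BBot d).
Proof.
  intros Hd Hlt; pose proof (in01_1m _ Hd) as Hd'.
  destruct (der_or_elim (GI1 BTop a (1 - d)) (GI1 a BBot (1 - (1 - d))) Hd' (in01_1m _ Hd')
              (d_ax _ _ _ (ax_lin2 _ a _ Hd'))) as [H|H].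
  - apply sup_val_ge in H; [lra|exact Hd'].
  - replace (1 - (1 - d)) with d in H by ring; exact H.
Qed.

Lemma der_bot_below a r : 0 < r -> D (GI1 a BBot (Rmax 0 (1 - v a - r))).
Proof.
  intros Hr; pose proof (sup_val_in01 a) as Ha.
  destruct (Rmax0_sub_lt (1 - v a) r Hr) as [-> | Hlt]; [apply d_ax, ax_zero|].
  apply der_bot_of_lt; [apply Rmax0_sub_in01; unfold in01 in Ha; lra|exact Hlt].
Qed.

Lemma der_of_sup_val_sat a l b e t : in01 t -> t < e ->
  avg (map v (a :: l)) <= v b + 1 - e -> D (GI a l b t).
Proof.
  intros Ht Hte Hsat.
  set (r := (e - t) / 4); assert (Hr : 0 < r) by (unfold r; lra).
  set (g := fun y => Rmax 0 (1 - v y - r)).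
  assert (Hg : forall y, In y (a :: l) -> in01 (g y) /\ D (GI1 y BBot (g y))).
  { intros y _; split; [|apply der_bot_below, Hr].
    pose proof (sup_val_in01 y); apply Rmax0_sub_in01; unfold in01 in *; lra. }
  set (c := Rmax 0 (v b - r)).
  assert (Hc : in01 c) by (apply Rmax0_sub_in01; [lra|apply sup_val_in01]).
  pose proof (der_bot_avg tn Gam g a l b c Hg Hc (der_top_below b r Hr)) as H.
  assert (Hg01 : in01 (avg (map g (a :: l))))
    by (apply avg_map_in01; intros y Hy; apply Hg, Hy).
  apply (der_grade_lower tn Gam _ _ _ _ _ (luk_or_in01 _ _ Hg01 Hc) Ht); [|exact H].
  assert (Hshift : avg (map (fun y => 1 - v y) (a :: l)) - r <= avg (map g (a :: l)))
    by (apply avg_shift; intros y _; apply Rmax_r).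
  rewrite avg_one_minus in Hshift.
  assert (Hcb : v b - r <= c) by apply Rmax_r.
  unfold luk_or, Rmin; destruct (Rle_dec _ _); unfold in01, r in *; lra.
Qed.

Lemma sup_val_bot : v BBot = 0.
Proof.
  pose proof (sup_val_in01 BBot) as [H0 H1].
  destruct (Req_dec (v BBot) 0) as [|Hn]; auto; exfalso.
  assert (Hc : in01 (v BBot / 2)) by (unfold in01; lra).
  apply (der_consistent (GI1 BTop BBot (v BBot / 2)) Hc).
  - apply der_top_of_lt; [exact Hc|lra].
  - apply d_ax, ax_inkons; [exact Hc|lra].
Qed.

Lemma sup_val_and a b : v (BAnd a b) = Rmin (v a) (v b).
Proof.
  pose proof (sup_val_sat1 _ _ _ in01_1 (d_ax _ _ _ (ax_and2 _ a b))).
  pose proof (sup_val_sat1 _ _ _ in01_1 (d_ax _ _ _ (ax_and3 _ a b))).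
  apply Rle_antisym; [apply Rmin_glb; lra|apply Rnot_lt_le; intros Hlt].
  pose proof (Rmin_l (v a) (v b)); pose proof (Rmin_r (v a) (v b)).
  pose proof (sup_val_in01 a); pose proof (sup_val_in01 b); pose proof (sup_val_in01 (BAnd a b)).
  set (c := (v (BAnd a b) + Rmin (v a) (v b)) / 2).
  assert (Hc : in01 c) by (unfold c, in01 in *; lra).
  assert (Hab : D (GI1 BTop (BAnd a b) c)).
  { eapply d_mp; [|apply d_ax, ax_and1, Hc].
    apply der_and; auto; apply der_top_of_lt; auto; unfold c; lra. }
  apply sup_val_ge in Hab; [unfold c in Hab; lra|exact Hc].
Qed.

Lemma sup_val_or a b : v (BOr a b) = Rmax (v a) (v b).
Proof.
  pose proof (sup_val_sat1 _ _ _ in01_1 (d_ax _ _ _ (ax_or2 _ a b))).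
  pose proof (sup_val_sat1 _ _ _ in01_1 (d_ax _ _ _ (ax_or3 _ a b))).
  apply Rle_antisym; [apply Rnot_lt_le; intros Hlt|apply Rmax_lub; lra].
  pose proof (Rmax_l (v a) (v b)); pose proof (Rmax_r (v a) (v b)).
  pose proof (sup_val_in01 a); pose proof (sup_val_in01 b); pose proof (sup_val_in01 (BOr a b)).
  set (c := (v (BOr a b) + Rmax (v a) (v b)) / 2).
  assert (Hd : in01 (1 - c)) by (unfold c, in01 in *; lra).
  assert (Hab : D (GI1 (BOr a b) BBot (1 - c))).
  { eapply d_mp; [|apply d_ax, ax_or1, Hd].
    apply der_and; auto; apply der_bot_of_lt; auto; unfold c; lra. }
  apply sup_val_sat1 in Hab; [rewrite sup_val_bot in Hab; unfold c in Hab; lra|exact Hd].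
Qed.

Lemma sup_val_neg_top : v (BNeg BTop) = 0.
Proof.
  pose proof (sup_val_sat1 _ _ _ in01_1 (d_ax _ _ _ (ax_neg2 _ BBot))).
  pose proof (sup_val_sat1 _ _ _ in01_1
    (d_mp _ _ _ _ (d_ax _ _ _ (ax_top _ (BNeg BBot))) (d_ax _ _ _ (ax_neg1 _ _ _ _ in01_1)))).
  pose proof (sup_val_in01 (BNeg BTop)); rewrite sup_val_bot in *; unfold in01 in *; lra.
Qed.

Lemma sup_val_neg_bot : v (BNeg BBot) = 1.
Proof.
  pose proof (sup_val_sat1 _ _ _ in01_1 (d_ax _ _ _ (ax_neg3 _ BTop))).
  pose proof (sup_val_sat1 _ _ _ in01_1
    (d_mp _ _ _ _ (d_ax _ _ _ (ax_bot _ (BNeg BTop))) (d_ax _ _ _ (ax_neg1 _ _ _ _ in01_1)))).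
  pose proof (sup_val_in01 (BNeg BBot)); rewrite sup_val_top in *; unfold in01 in *; lra.
Qed.

(* Contraposition (neg1) turns an approximation of one side into one of the other,
   with bot and top as the pivots. *)
Lemma sup_val_neg a : v (BNeg a) = 1 - v a.
Proof.
  pose proof (sup_val_in01 a); pose proof (sup_val_in01 (BNeg a)).
  pose proof (sup_val_sat1 _ _ _ in01_1 (d_ax _ _ _ (ax_neg3 _ a))).
  set (c := (v (BNeg a) + 1 - v a) / 2).
  apply Rle_antisym; apply Rnot_lt_le; intros Hlt;
    assert (Hc : in01 c) by (unfold c, in01 in *; lra).
  - assert (Hna : D (GI1 BTop (BNeg a) c)) by (apply der_top_of_lt; auto; unfold c; lra).
    pose proof (sup_val_sat1 _ _ _ Hc (d_mp _ _ _ _ Hna (d_ax _ _ _ (ax_neg1 _ _ _ _ Hc)))).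
    rewrite sup_val_neg_top in *; unfold c in *; lra.
  - assert (Ha : D (GI1 a BBot c)) by (apply der_bot_of_lt; auto; unfold c; lra).
    pose proof (sup_val_sat1 _ _ _ Hc (d_mp _ _ _ _ Ha (d_ax _ _ _ (ax_neg1 _ _ _ _ Hc)))).
    rewrite sup_val_neg_bot in *; unfold c in *; lra.
Qed.

Lemma sup_val_odot_le a b : v (BOdot a b) <= tn (v a) (v b).
Proof.
  pose proof (sup_val_in01 a) as Ha; pose proof (sup_val_in01 b) as Hb.
  apply Rnot_lt_le; intros Hlt.
  destruct (Hct _ _ Ha Hb (v (BOdot a b) - tn (v a) (v b))) as [del [Hdel Hcont]]; [lra|].
  set (r := del / 2); assert (Hr : 0 < r) by (unfold r; lra).
  set (da := Rmax 0 (1 - v a - r)); set (db := Rmax 0 (1 - v b - r)).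
  assert (Hda : in01 da) by (apply Rmax0_sub_in01; unfold in01 in *; lra).
  assert (Hdb : in01 db) by (apply Rmax0_sub_in01; unfold in01 in *; lra).
  assert (Hda_close : Rabs (1 - v a - da) <= r)
    by (apply Rmax0_sub_dist; unfold in01 in *; lra).
  assert (Hdb_close : Rabs (1 - v b - db) <= r)
    by (apply Rmax0_sub_dist; unfold in01 in *; lra).
  assert (Hab : D (GI1 (BOdot a b) BBot (tconorm tn da db))).
  { eapply d_mp; [|apply d_ax, ax_odot2; auto].
    apply der_and; auto; apply der_bot_below, Hr. }
  apply sup_val_sat1 in Hab; [|apply tconorm_in01; auto].
  rewrite sup_val_bot in Hab; unfold tconorm in Hab.
  assert (Hclose : Rabs (tn (v a) (v b) - tn (1 - da) (1 - db)) < v (BOdot a b) - tn (v a) (v b)).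
  { apply Hcont; try apply in01_1m; auto;
      [replace (v a - (1 - da)) with (- (1 - v a - da)) by ring
      |replace (v b - (1 - db)) with (- (1 - v b - db)) by ring];
      rewrite Rabs_Ropp; unfold r in *; lra. }
  apply Rabs_def2 in Hclose; lra.
Qed.

Lemma sup_val_odot_ge a b : tn (v a) (v b) <= v (BOdot a b).
Proof.
  pose proof (sup_val_in01 a) as Ha; pose proof (sup_val_in01 b) as Hb.
  apply Rnot_lt_le; intros Hlt.
  destruct (Hct _ _ Ha Hb (tn (v a) (v b) - v (BOdot a b))) as [del [Hdel Hcont]]; [lra|].
  set (r := del / 2); assert (Hr : 0 < r) by (unfold r; lra).
  set (ca := Rmax 0 (v a - r)); set (cb := Rmax 0 (v b - r)).
  assert (Hca : in01 ca) by (apply Rmax0_sub_in01; unfold in01 in *; lra).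
  assert (Hcb : in01 cb) by (apply Rmax0_sub_in01; unfold in01 in *; lra).
  assert (Hca_close : Rabs (v a - ca) <= r) by (apply Rmax0_sub_dist; unfold in01 in *; lra).
  assert (Hcb_close : Rabs (v b - cb) <= r) by (apply Rmax0_sub_dist; unfold in01 in *; lra).
  assert (Hab : D (GI1 BTop (BOdot a b) (tn ca cb))).
  { eapply d_mp; [|apply d_ax, ax_odot1; auto].
    apply der_and; auto; apply der_top_below, Hr. }
  apply sup_val_ge in Hab; [|apply tn_in01; auto].
  assert (Hclose : Rabs (tn (v a) (v b) - tn ca cb) < tn (v a) (v b) - v (BOdot a b))
    by (apply Hcont; auto; unfold r in *; lra).
  apply Rabs_def2 in Hclose; lra.
Qed.

Lemma sup_val_is_eval : is_eval tn v.
Proof.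
  refine (conj sup_val_in01 (conj sup_val_bot (conj sup_val_top
           (conj sup_val_and (conj sup_val_or (conj _ sup_val_neg)))))).
  intros a b; apply Rle_antisym; [apply sup_val_odot_le|apply sup_val_odot_ge].
Qed.

End MaximalTheory.
End SupremumValuation.

Theorem mainTheorem9 :
  forall (tn : R -> R -> R) (T : form -> Prop)
         (z : bexpr) (zs : list bexpr) (eta : bexpr) (e : R),
    is_cont_tnorm tn ->
    (forall p, T p -> is_gi p /\ wf_form p) ->
    in01 e ->
    models tn T (GI z zs eta e) ->
    forall t, in01 t -> t < e -> lgim_derivable tn T (GI z zs eta t).
Proof.
  intros tn T z zs eta e [Htn Hct] HT He Hmod t Ht Hte.
  set (G := GI z zs eta t).
  apply NNPP; intros HnG.
  destruct (lindenbaum tn T G (fun q Hq => proj2 (HT q Hq)) HnG)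
    as [Gam [HTGam [HGamw [HnGam Hmax]]]].
  apply HnGam, (der_of_sup_val_sat tn Gam Htn G Ht HGamw HnGam Hmax z zs eta e t Ht Hte).
  apply Hmod; [exact (sup_val_is_eval tn Gam Htn Hct G Ht HGamw HnGam Hmax)|].
  intros q Hq; destruct (HT q Hq) as [[a [l [b [c ->]]]] Hc].
  apply sup_val_sat; [exact Hc|apply d_hyp, HTGam, Hq].
Qed.
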